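(* Let $(S,K,I)$ be an active split graph. If $\Phi(S)$ is simple and connected but not complete, then the factor graph $\Phi(\overline{S})$ of the split graph $(\overline{S},I,K)$ is complete but not simple.
   Context: All graphs are finite and simple. A split graph is a graph $S$ whose vertex set is a disjoint union $V(S)=K\,\dot\cup\,I$ with $K$ a clique and $I$ an independent set; $(K,I)$ is called a bipartition of $S$, and $(S,K,I)$ denotes $S$ together with this fixed bipartition. $\overline{S}$ is the complement of $S$; it is a split graph with clique $I$ and independent set $K$. A 2-switch in a graph $G$ is performed on four distinct vertices $a,b,c,d$ with $ab,cd\in E(G)$ and $ac,bd\notin E(G)$: it deletes $ab,cd$ and adds $ac,bd$; $a,b,c,d$ are said to participate in it. A vertex is active in $G$ if it participates in some 2-switch on $G$; $G$ is active if all its vertices are active. For a split graph $(S,K,I)$ and distinct $u,v\in I$, $\sigma_{uv}(S)$ is the number of induced subgraphs of $S$ isomorphic to $P_4$ containing both $u$ and $v$. The factor graph $\Phi(S)$ is the loopless multigraph with vertex set $I$ having exactly $\sigma_{uv}(S)$ parallel edges between $u$ and $v$; it is simple if $\sigma_{uv}(S)\in\{0,1\}$ for all $u,v$. Graph notions (connected, complete, etc.) applied to $\Phi(S)$ refer to its underlying simple graph, in which $u\sim v$ iff $\sigma_{uv}(S)\ge1$. *)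

From mathcomp Require Import all_boot.
Set Implicit Arguments. Unset Strict Implicit. Unset Printing Implicit Defensive.

Section Graphs.
Variable T : finType.

Definition simple_graph (e : rel T) : Prop :=
  symmetric e /\ irreflexive e.

Definition compl_graph (e : rel T) : rel T := fun x y => (x != y) && ~~ e x y.

Definition is_split (e : rel T) (K I : {set T}) : Prop :=
  [disjoint K & I] /\ K :|: I = [set: T] /\
  (forall x y, x \in K -> y \in K -> x != y -> e x y) /\
  (forall x y, x \in I -> y \in I -> ~~ e x y).

Definition two_switch (e : rel T) (a b c d : T) : bool :=
  [&& uniq [:: a; b; c; d], e a b, e c d, ~~ e a c & ~~ e b d].

Definition active_vertex (e : rel T) (x : T) : Prop :=
  exists a b c d, two_switch e a b c d /\ x \in [:: a; b; c; d].

Definition active_graph (e : rel T) : Prop := forall x, active_vertex e x.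

Definition induced_P4 (e : rel T) (X : {set T}) : bool :=
  [exists a, exists b, exists c, exists d,
    [&& uniq [:: a; b; c; d], X == [set a; b; c; d],
        e a b, e b c, e c d, ~~ e a c, ~~ e b d & ~~ e a d]].

Definition sigma (e : rel T) (u v : T) : nat :=
  #|[set X : {set T} | [&& u \in X, v \in X & induced_P4 e X]]|.

(* factor graph Phi(S) on vertex set I (underlying simple graph) *)
Definition factor_adj (e : rel T) (u v : T) : bool := (u != v) && (0 < sigma e u v).

Definition factor_simple (e : rel T) (I : {set T}) : Prop :=
  forall u v, u \in I -> v \in I -> u != v -> sigma e u v <= 1.

Definition factor_complete (e : rel T) (I : {set T}) : Prop :=
  forall u v, u \in I -> v \in I -> u != v -> 0 < sigma e u v.

Definition factor_connected (e : rel T) (I : {set T}) : Prop :=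
  forall u v, u \in I -> v \in I ->
    exists p : seq T, [/\ all (mem I) p, path (factor_adj e) u p & last u p = v].

End Graphs.

From mathcomp Require Import all_boot.
Set Implicit Arguments. Unset Strict Implicit. Unset Printing Implicit Defensive.

(* For independent u, v, an induced P4 through u and v is u-b-c-v with b in
   N(u) \ N(v) and c in N(v) \ N(u), so sigma_uv = |N(u) \ N(v)| * |N(v) \ N(u)|.
   A simple edge of Phi(S) therefore joins vertices of equal degree; by
   connectivity all of I has the same degree, whence sigma_uv = |N(u) \ N(v)|^2
   and |N(u) \ N(v)| <= 1 throughout I.  In the complement, for x, y in K,
   sigma_xy = |I & N(y) \ N(x)| * |I & N(x) \ N(y)|.  Activity gives every x in K
   a neighbour and a non-neighbour in I, and the bound above turns these into a
   vertex of I separating any two vertices of K: Phi of the complement is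
   complete.  A non-edge uv of Phi(S) means N(u) = N(v); for a Phi-neighbour w
   of u, x in N(u) \ N(w) and y in N(w) \ N(u), both u and v lie in
   N(x) \ N(y) while w lies in N(y) \ N(x), so sigma_xy >= 2 in the complement. *)

Definition nbhd (T : finType) (e : rel T) (u : T) : {set T} := [set y | e u y].

Lemma nbhdE (T : finType) (e : rel T) u y : (y \in nbhd e u) = e u y.
Proof. by rewrite inE. Qed.

Lemma eq_cards_setD (T : finType) (A B : {set T}) :
  (#|A| == #|B|) = (#|A :\: B| == #|B :\: A|).
Proof. by rewrite -(cardsID B A) -(cardsID A B) setIC eqn_add2l. Qed.

Lemma compl_graph_sym (T : finType) (e : rel T) :
  symmetric e -> symmetric (compl_graph e).
Proof. by move=> e_sym x y; rewrite /compl_graph eq_sym e_sym. Qed.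

Lemma mem_setD_le1 (T : finType) (A B : {set T}) x y :
  #|A :\: B| <= 1 -> x \in A :\: B -> y \in A -> y != x -> y \in B.
Proof.
move=> le1 xAB yA yx; apply/negPn/negP => yB.
have : #|[set x; y]| <= #|A :\: B|.
  apply/subset_leq_card/subsetP => z; rewrite in_set2.
  by case/orP => /eqP-> //; rewrite inE yA yB.
by rewrite cards2 eq_sym yx => /leq_trans/(_ le1).
Qed.

Section SplitGraph.
Variables (T : finType) (e : rel T) (K I : {set T}).
Hypotheses (e_sym : symmetric e) (eKI : is_split e K I).

Lemma split_memK x : (x \in K) = (x \notin I).
Proof.
case: eKI => dKI [UKI _]; apply/idP/idP => [xK|xnI]; first by rewrite (disjointFr dKI xK).
have : x \in K :|: I by rewrite UKI inE.
by rewrite inE (negbTE xnI) orbF.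
Qed.

Lemma split_clique x y : x \in K -> y \in K -> x != y -> e x y.
Proof. by case: eKI => _ [_ [Kc _]]; apply: Kc. Qed.

Lemma split_indep x y : x \in I -> y \in I -> e x y = false.
Proof. by case: eKI => _ [_ [_ Ii]] xI yI; apply/negbTE/Ii. Qed.

Lemma split_neq x y : x \in K -> y \in I -> x != y.
Proof. by move=> xK yI; apply: contraTneq xK => ->; rewrite split_memK yI. Qed.

Lemma compl_is_split : is_split (compl_graph e) I K.
Proof.
case: eKI => dKI [UKI _]; split; first by rewrite disjoint_sym.
split; first by rewrite setUC.
split=> x y xP yP; rewrite /compl_graph; first by move=> ->; rewrite split_indep.
by have [//|xy] := eqVneq x y; rewrite split_clique.
Qed.

Lemma split_nbhd_indep u y : u \in I -> e u y -> y \in K.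
Proof. by move=> uI; apply: contraLR; rewrite split_memK negbK => /(split_indep uI)->. Qed.

Lemma P4_end_indep a c d : a != c -> a != d -> e c d -> ~~ e a c -> ~~ e a d -> a \in I.
Proof.
move=> ac ad ecd eac ead; rewrite -[_ \in I]negbK -split_memK; apply/negP => aK.
have nK x : a != x -> ~~ e a x -> x \in I.
  by move=> ax; apply: contraNT; rewrite -split_memK => xK; apply: split_clique.
by move: ecd; rewrite split_indep ?nK.
Qed.

Lemma induced_P4_through u v (X : {set T}) : u \in I -> v \in I -> u != v ->
    u \in X -> v \in X -> induced_P4 e X ->
  exists b c, [/\ b \in nbhd e u :\: nbhd e v, c \in nbhd e v :\: nbhd e u
              & X = [set u; v; b; c]].
Proof.
move=> uI vI uv uX vX /existsP[a /existsP[b /existsP[c /existsP[d]]]].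
rewrite /= !inE !negb_or => /and5P[/and4P[/and3P[ab ac ad] /andP[bc bd] cd _]].
move=> /eqP defX eab ebc /and4P[ecd eac ebd ead].
have aI : a \in I by apply: (P4_end_indep ac ad).
have dI : d \in I by apply: (@P4_end_indep d b a); rewrite 1?eq_sym 1?e_sym.
have bK := split_nbhd_indep aI eab.
have cK : c \in K by apply: (split_nbhd_indep dI); rewrite e_sym.
have endsI x : x \in I -> x \in X -> (x == a) || (x == d).
  move=> xI; rewrite defX !inE.
  have /negbTE-> : x != b by rewrite eq_sym split_neq.
  have /negbTE-> : x != c by rewrite eq_sym split_neq.
  by rewrite !orbF.
have bD : b \in nbhd e a :\: nbhd e d by rewrite !inE eab (e_sym d) (negbTE ebd).
have cD : c \in nbhd e d :\: nbhd e a by rewrite !inE (e_sym d) ecd (negbTE eac).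
move: (endsI u uI uX) (endsI v vI vX) uv.
case/orP=> /eqP-> ; case/orP=> /eqP->; rewrite ?eqxx // => _.
- by exists b, c; split; rewrite // defX; apply/setP => z; rewrite !inE; do ![case: (_ == _)].
- by exists c, b; split; rewrite // defX; apply/setP => z; rewrite !inE; do ![case: (_ == _)].
Qed.

Section InducedP4.
Variables (u v b c : T).
Hypotheses (uI : u \in I) (vI : v \in I) (uv : u != v)
  (bD : b \in nbhd e u :\: nbhd e v) (cD : c \in nbhd e v :\: nbhd e u).

Lemma P4_setI_nbhd : [set u; v; b; c] :&: nbhd e u = [set b].
Proof.
move: bD cD; rewrite !inE => /andP[_ eub] /andP[euc _].
apply/setP => z; rewrite !inE; have [->|zb] := eqVneq z b; first by rewrite orbT.
apply/negbTE/andP => -[]; rewrite orbF => /orP[/orP[]|]/eqP->;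
  by [rewrite split_indep | rewrite split_indep | apply/negP].
Qed.

Lemma induced_P4_of_setD : induced_P4 e [set u; v; b; c].
Proof.
move: bD cD; rewrite !inE => /andP[evb eub] /andP[euc evc].
have bK := split_nbhd_indep uI eub; have cK := split_nbhd_indep vI evc.
apply/existsP; exists u; apply/existsP; exists b; apply/existsP; exists c; apply/existsP; exists v.
have bc : b != c by apply: contraNneq euc => <-.
rewrite /= !inE !negb_or uv bc -!(eq_sym b) -!(eq_sym c) !split_neq //=.
rewrite eub split_clique // (e_sym c) evc (e_sym b) (split_indep uI vI) euc evb /= andbT.
by apply/eqP/setP => z; rewrite !inE; do ![case: (_ == _)].
Qed.

End InducedP4.

Lemma sigma_split u v : u \in I -> v \in I -> u != v ->
  sigma e u v = #|nbhd e u :\: nbhd e v| * #|nbhd e v :\: nbhd e u|.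
Proof.
move=> uI vI uv; rewrite /sigma; pose P4 (bc : T * T) := [set u; v; bc.1; bc.2].
have -> : [set X : {set T} | [&& u \in X, v \in X & induced_P4 e X]]
        = P4 @: setX (nbhd e u :\: nbhd e v) (nbhd e v :\: nbhd e u).
  apply/setP => X; rewrite inE; apply/and3P/imsetP => [[uX vX P4X]|[[b c]]].
    have [b [c [bD cD ->]]] := induced_P4_through uI vI uv uX vX P4X.
    by exists (b, c) => //; rewrite inE bD cD.
  rewrite inE /= => /andP[bD cD] ->.
  by split; rewrite ?induced_P4_of_setD // !inE eqxx ?orbT.
rewrite card_in_imset ?cardsX // => -[b c] [b' c']; rewrite !in_setX /=.
move=> /andP[bD cD] /andP[bD' cD'] eqP4.
have swap x y z w : [set x; y; z; w] = [set y; x; w; z] :> {set T}.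
  by apply/setP => t; rewrite !inE; do ![case: (_ == _)].
have := congr1 (fun X => X :&: nbhd e u) eqP4; rewrite /P4 /= !P4_setI_nbhd //.
have := congr1 (fun X => X :&: nbhd e v) eqP4; rewrite /P4 /= !(swap u v).
by rewrite !P4_setI_nbhd 1?eq_sym // => /set1_inj-> /set1_inj->.
Qed.

Lemma two_switch_rot a b c d : two_switch e a b c d ->
  [/\ two_switch e b a d c, two_switch e c d a b & two_switch e d c b a].
Proof.
case/and5P => + eab ecd eac ebd; rewrite /= !inE !negb_or.
case/and4P => /and3P[ab ac ad] /andP[bc bd] cd _.
split; apply/and5P; split=> //; try by rewrite e_sym.
all: rewrite /= !inE !negb_or.
all: by rewrite !(eq_sym b a, eq_sym c a, eq_sym d a, eq_sym c b, eq_sym d b, eq_sym d c)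
  ab ac ad bc bd cd.
Qed.

Lemma two_switch_K_head a b c d : two_switch e a b c d -> a \in K -> b \in I /\ c \in I.
Proof.
case/and5P => + eab ecd eac ebd aK; rewrite /= !inE !negb_or.
case/and4P => /and3P[_ ac _] /andP[_ bd] _ _.
have cI : c \in I by apply: contraNT eac; rewrite -split_memK => cK; apply: split_clique.
have dK : d \in K by apply: contraTT ecd; rewrite split_memK negbK => /(split_indep cI)->.
by split=> //; apply: contraNT ebd; rewrite -split_memK => bK; apply: split_clique.
Qed.

Lemma active_K_vertex x : x \in K -> active_vertex e x ->
  (exists2 u, u \in I & e x u) /\ (exists2 w, w \in I & ~~ e x w).
Proof.
move=> xK [a [b [c [d [sw]]]]]; have [sw_b sw_c sw_d] := two_switch_rot sw.
have head a' b' c' d' : two_switch e a' b' c' d' -> x = a' ->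
    (exists2 u, u \in I & e x u) /\ (exists2 w, w \in I & ~~ e x w).
  move=> sw' xa; rewrite xa in xK *; have [bI cI] := two_switch_K_head sw' xK.
  by case/and5P: sw' => _ eab _ eac _; split; [exists b' | exists c'].
by rewrite !inE => /or4P[]/eqP;
  [apply: head sw | apply: head sw_b | apply: head sw_c | apply: head sw_d].
Qed.

End SplitGraph.

Section FactorGraph.
Variables (T : finType) (e : rel T) (K I : {set T}).
Hypotheses (e_sym : symmetric e) (eKI : is_split e K I).

Lemma nbhd_compl_split x : x \in K -> nbhd (compl_graph e) x = I :\: nbhd e x.
Proof.
move=> xK; apply/setP => z; rewrite !inE /compl_graph.
case: (boolP (z \in I)) => [zI|zNI]; first by rewrite (split_neq eKI) ?andbT.
have zK : z \in K by rewrite (split_memK eKI).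
rewrite andbF; have [//|xz] := eqVneq x z.
by rewrite (split_clique eKI xK zK xz) andbF.
Qed.

Lemma sigma_compl_split x y : x \in K -> y \in K -> x != y ->
  sigma (compl_graph e) x y
    = #|I :&: nbhd e y :\: nbhd e x| * #|I :&: nbhd e x :\: nbhd e y|.
Proof.
move=> xK yK xy.
rewrite (sigma_split (compl_graph_sym e_sym) (compl_is_split eKI)) //.
have setDC A B : (I :\: A) :\: (I :\: B) = I :&: B :\: A.
  by apply/setP => z; rewrite !inE; case: (z \in A); case: (z \in B); case: (z \in I).
by rewrite !nbhd_compl_split // !setDC.
Qed.

Hypotheses (Phi_simple : factor_simple e I) (Phi_conn : factor_connected e I).

Lemma factor_adj_eq_cards_nbhd u v : u \in I -> v \in I -> factor_adj e u v ->
  #|nbhd e u| = #|nbhd e v|.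
Proof.
move=> uI vI /andP[uv s_gt0]; apply/eqP; rewrite eq_cards_setD.
have : sigma e u v == 1 by rewrite eqn_leq s_gt0 Phi_simple.
by rewrite (sigma_split e_sym eKI) // muln_eq1 => /andP[/eqP-> /eqP->].
Qed.

Lemma eq_cards_nbhd u v : u \in I -> v \in I -> #|nbhd e u| = #|nbhd e v|.
Proof.
move=> uI vI; have [p [pI pu <-]] := Phi_conn uI vI.
elim: p u uI pI pu => //= w p IHp u uI /andP[wI pI] /andP[uw pw].
by rewrite (factor_adj_eq_cards_nbhd uI wI uw) IHp.
Qed.

Lemma cards_nbhd_setDC u v : u \in I -> v \in I ->
  #|nbhd e u :\: nbhd e v| = #|nbhd e v :\: nbhd e u|.
Proof. by move=> uI vI; apply/eqP; rewrite -eq_cards_setD (eq_cards_nbhd uI vI). Qed.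

Lemma sigma_sqr u v : u \in I -> v \in I -> u != v ->
  sigma e u v = #|nbhd e u :\: nbhd e v| ^ 2.
Proof. by move=> uI vI uv; rewrite (sigma_split e_sym eKI) // -mulnn cards_nbhd_setDC. Qed.

Lemma cards_nbhd_setD_le1 u v : u \in I -> v \in I -> #|nbhd e u :\: nbhd e v| <= 1.
Proof.
move=> uI vI; have [->|uv] := eqVneq u v; first by rewrite setDv cards0.
by rewrite -(leq_exp2r _ _ (ltn0Sn 1)) -sigma_sqr // Phi_simple.
Qed.

Lemma compl_factor_not_simple u v : u \in I -> v \in I -> u != v -> sigma e u v = 0 ->
  ~ factor_simple (compl_graph e) K.
Proof.
move=> uI vI uv s0 compl_simple.
have Nuv : nbhd e u = nbhd e v.
  move/eqP: s0; rewrite sigma_sqr // expn_eq0 andbT cards_eq0 => /eqP Duv.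
  move/eqP: (cards_nbhd_setDC uI vI); rewrite Duv cards0 eq_sym cards_eq0 => /eqP Dvu.
  by apply/eqP; rewrite eqEsubset -!setD_eq0 Duv Dvu eqxx.
have [[|w p] [/= pI pu lastp]] := Phi_conn uI vI; first by rewrite lastp eqxx in uv.
move: pI pu => /andP[wI _] /andP[/andP[uw]].
rewrite (sigma_split e_sym eKI) // muln_gt0 => /andP[/card_gt0P[x xD] /card_gt0P[y yD]] _.
move: xD yD; rewrite !inE => /andP[ewx eux] /andP[euy ewy].
have xK := split_nbhd_indep eKI uI eux; have yK := split_nbhd_indep eKI wI ewy.
have xy : x != y by apply: contraNneq euy => <-.
have Nv t : e v t = e u t by rewrite -!nbhdE Nuv.
have : 1 * 2 <= sigma (compl_graph e) x y.
  rewrite sigma_compl_split //; apply: leq_mul.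
    by apply/card_gt0P; exists w; rewrite !inE (e_sym y) ewy (e_sym x) ewx wI.
  have <- : #|[set u; v]| = 2 by rewrite cards2 uv.
  apply/subset_leq_card/subsetP => z; rewrite in_set2.
  by case/orP => /eqP->; rewrite !inE (e_sym x) (e_sym y) ?Nv eux euy ?uI ?vI.
by move/leq_trans/(_ (compl_simple x y xK yK xy)).
Qed.

Hypothesis e_active : active_graph e.

Lemma nbhd_separates x y : x \in K -> y \in K -> x != y ->
  exists z, z \in I :&: nbhd e y :\: nbhd e x.
Proof.
move=> xK yK xy.
have [[u uI eyu] _] := active_K_vertex e_sym eKI yK (e_active y).
have [_ [w wI exw]] := active_K_vertex e_sym eKI xK (e_active x).
case eyw : (e y w); first by exists w; rewrite !inE eyw exw wI.
case exu : (e x u); last by exists u; rewrite !inE eyu exu uI.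
(* Neither w nor u separates, so x is the unique element of N(u) \ N(w) and y is in N(w). *)
have : y \in nbhd e w.
  apply: (mem_setD_le1 (cards_nbhd_setD_le1 uI wI) (x := x)); last by rewrite eq_sym.
    by rewrite !inE (e_sym u) exu (e_sym w) exw.
  by rewrite inE e_sym.
by rewrite inE e_sym eyw.
Qed.

Lemma compl_factor_complete : factor_complete (compl_graph e) K.
Proof.
move=> x y xK yK xy; rewrite sigma_compl_split // muln_gt0.
by apply/andP; split; apply/card_gt0P; apply: nbhd_separates; rewrite // eq_sym.
Qed.

End FactorGraph.

Theorem corollary5p4 (T : finType) (e : rel T) (K I : {set T}) :
  simple_graph e -> is_split e K I -> active_graph e ->
  factor_simple e I -> factor_connected e I -> ~ factor_complete e I ->
  factor_complete (compl_graph e) K /\ ~ factor_simple (compl_graph e) K.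
Proof.
move=> [e_sym _] eKI e_active Phi_simple Phi_conn Phi_not_complete.
split; first exact: (compl_factor_complete e_sym eKI Phi_simple Phi_conn e_active).
move=> compl_simple; apply: Phi_not_complete => u v uI vI uv.
rewrite lt0n; apply/eqP => s0.
exact: (compl_factor_not_simple e_sym eKI Phi_simple Phi_conn uI vI uv s0).
Qed.
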